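(* Let $\varphi:\mathbb{R}\to[0,1]$ be defined by $\varphi(s)=0$ if $s<0$, $\varphi(s)=s$ if $s\in[0,1]$, $\varphi(s)=1$ if $s>1$. Let $$A_0=\begin{pmatrix}-0.1 & 0.5\\ -2 & 0\end{pmatrix},\qquad A_1=\begin{pmatrix}0 & 2\\ -0.5 & -0.1\end{pmatrix},$$ and $g(x,u)=(1+|x|^2)\big(\varphi(u)A_1+(1-\varphi(u))A_0\big)x$ for $x\in\mathbb{R}^2$, $u\in\mathbb{R}$. For $c>0$ consider the time-delay system $$\dot x(t)=c\,\varphi(z_2(t-2))\,g\big(x(t),z_1(t-1)\big)+c\big(1-\varphi(z_2(t-2))\big)A_0x(t),\qquad \dot z_1(t)=-z_1(t),\qquad \dot z_2(t)=-z_2(t),$$ with $x(t)\in\mathbb{R}^2$, $z_1(t),z_2(t)\in\mathbb{R}$ and initial data $x_0\in C([-2,0],\mathbb{R})^2$, $z_{10},z_{20}\in C([-2,0],\mathbb{R})$ prescribed on $[-2,0]$. Then there exists a constant $c>0$ such that, for every $M>0$, there exist $z_{10}\in C([-2,0],\mathbb{R})$ with $\|z_{10}\|\le1$ and $z_{10}(0)=0$, and $x_0\in C([-2,0],\mathbb{R})^2$ with $\|x_0\|\le1$, such that for every $z_{20}\in C([-2,0],\mathbb{R})$ satisfying $z_{20}(t)=1$ for all $t\in[-2,-1]$, the corresponding solution satisfies $|x(1)|\ge 2M$.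
   Context: $|\cdot|$ denotes the Euclidean norm and, for a continuous function $\psi$ on $[-2,0]$, $\|\psi\|=\sup_{\tau\in[-2,0]}|\psi(\tau)|$. *)

From Stdlib Require Import Reals.
From Coquelicot Require Import Coquelicot.
Open Scope R_scope.

Definition phi (s : R) : R :=
  if Rlt_dec s 0 then 0 else if Rle_dec s 1 then s else 1.

Definition vnorm (x : R * R) : R := sqrt (fst x ^ 2 + snd x ^ 2).

(* A0 = [[-0.1, 0.5], [-2, 0]],  A1 = [[0, 2], [-0.5, -0.1]] acting on column vectors. *)
Definition A0 (x : R * R) : R * R :=
  ((-1/10) * fst x + (1/2) * snd x, (-2) * fst x + 0 * snd x).
Definition A1 (x : R * R) : R * R :=
  (0 * fst x + 2 * snd x, (-1/2) * fst x + (-1/10) * snd x).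

Definition g (x : R * R) (u : R) : R * R :=
  let k := 1 + vnorm x ^ 2 in
  let p := phi u in
  (k * (p * fst (A1 x) + (1 - p) * fst (A0 x)),
   k * (p * snd (A1 x) + (1 - p) * snd (A0 x))).

(* Right-hand side of the x-equation:
   c phi(w2) g(x, w1) + c (1 - phi(w2)) A0 x, with w1 = z1(t-1), w2 = z2(t-2). *)
Definition rhs (c : R) (x : R * R) (w1 w2 : R) : R * R :=
  let q := phi w2 in
  (c * q * fst (g x w1) + c * (1 - q) * fst (A0 x),
   c * q * snd (g x w1) + c * (1 - q) * snd (A0 x)).

Definition cont_on (a b : R) (f : R -> R) : Prop :=
  forall t, a <= t <= b ->
    filterlim f (within (fun s => a <= s <= b) (locally t)) (locally (f t)).

Definition is_solution (c : R) (x01 x02 z10 z20 : R -> R)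
    (x1 x2 z1 z2 : R -> R) : Prop :=
  (forall t, -2 <= t <= 0 ->
     x1 t = x01 t /\ x2 t = x02 t /\ z1 t = z10 t /\ z2 t = z20 t) /\
  cont_on (-2) 1 x1 /\ cont_on (-2) 1 x2 /\
  cont_on (-2) 1 z1 /\ cont_on (-2) 1 z2 /\
  (forall t, 0 < t < 1 ->
     is_derive x1 t (fst (rhs c (x1 t, x2 t) (z1 (t - 1)) (z2 (t - 2)))) /\
     is_derive x2 t (snd (rhs c (x1 t, x2 t) (z1 (t - 1)) (z2 (t - 2)))) /\
     is_derive z1 t (- z1 t) /\
     is_derive z2 t (- z2 t)).

From Pilot Require Import Defs.
From Stdlib Require Import Reals Lra Nsatz Ranalysis5.
From Coquelicot Require Import Coquelicot.
(* [Reals] exports its own [A1]; re-importing [Defs] makes [A0] and [A1] the matrices again. *)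
Import Defs.
Open Scope R_scope.

(* We take c = 40.  For 0 < t < 1 the delayed argument z2(t-2) lies where z20 = 1, so
   x' = 40 (1 + |x|^2) B(p(t)) x with B(p) = p A1 + (1 - p) A0 and a control
   p(t) = phi(z10(t-1)) that we are free to choose.  With the switching law
   q(s) = (1 - sin 2s)/2, the curve Y(s) = e^K(s) (cos s, - sin s) satisfies
   Y'(s) = B(q(s)) Y(s) / a(s), where a(s) > 0 is the angular rate of B(q(s)) along the
   circle and K' is the ratio of radial to angular rate; K' has positive mean, so
   |Y(s)| = e^K(s) is unbounded.  Running along Y with the speed imposed by the factor
   1 + |x|^2 is the time change Theta' = 40 (1 + e^(2K(Theta))) a(Theta), and since
   e^(-2K) is integrable the whole arc from an angle p0 <= -1 (where |Y| <= 1) to any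
   angle X with q(X) = 0 and e^K(X) >= 2M is traversed in unit time: this is finite-time
   escape.  The vector field is one-sided Lipschitz on bounded sets, so this is the only
   solution, and every solution has |x(1)| >= 2M. *)

Lemma exp_le_compat x y : x <= y -> exp x <= exp y.
Proof. intros [Hlt | ->]; [left; apply exp_increasing, Hlt | right; reflexivity]. Qed.

Lemma ln_le_sub_one y : 0 < y -> ln y <= y - 1.
Proof. intros Hy. pose proof (exp_ineq1_le (ln y)). rewrite exp_ln in *; lra. Qed.

Lemma RInt_ge_const (f : R -> R) (a b m : R) :
  a <= b -> ex_RInt f a b -> (forall x, a <= x <= b -> m <= f x) ->
  m * (b - a) <= RInt f a b.
Proof.
  intros Hab Hf Hm.
  replace (m * (b - a)) with (RInt (fun _ => m) a b)
    by (rewrite RInt_const; apply Rmult_comm).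
  apply RInt_le; auto using ex_RInt_const.
  intros x Hx; apply Hm; lra.
Qed.

Lemma RInt_le_const (f : R -> R) (a b M : R) :
  a <= b -> ex_RInt f a b -> (forall x, a <= x <= b -> f x <= M) ->
  RInt f a b <= M * (b - a).
Proof.
  intros Hab Hf HM.
  replace (M * (b - a)) with (RInt (fun _ => M) a b)
    by (rewrite RInt_const; apply Rmult_comm).
  apply RInt_le; auto using ex_RInt_const.
  intros x Hx; apply HM; lra.
Qed.

Lemma ex_RInt_continuous_R (f : R -> R) (a b : R) :
  (forall x, continuous f x) -> ex_RInt f a b.
Proof. intros Hf. apply (@ex_RInt_continuous R_CompleteNormedModule); auto. Qed.

Lemma is_derive_RInt_continuous (f : R -> R) (a s : R) :
  (forall x, continuous f x) -> is_derive (fun t => RInt f a t) s (f s).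
Proof.
  intros Hf. apply (is_derive_RInt f _ a s); [|apply Hf].
  apply filter_forall; intros t.
  apply (@RInt_correct R_CompleteNormedModule), ex_RInt_continuous_R, Hf.
Qed.

Lemma RInt_Chasles_continuous (f : R -> R) (a b c : R) :
  (forall x, continuous f x) -> RInt f a b + RInt f b c = RInt f a c.
Proof.
  intros Hf. apply (@RInt_Chasles R_CompleteNormedModule); apply ex_RInt_continuous_R, Hf.
Qed.

Lemma lipschitz_continuous (f : R -> R) (k : R) :
  (forall x y, Rabs (f x - f y) <= k * Rabs (x - y)) -> forall t, continuous f t.
Proof.
  intros Hf t. apply filterlim_locally. intros eps.
  assert (Hd : 0 < eps / (Rabs k + 1)).
  { apply Rdiv_lt_0_compat; [apply cond_pos | pose proof (Rabs_pos k); lra]. }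
  exists (mkposreal _ Hd); intros y Hy. change (Rabs (y - t) < eps / (Rabs k + 1)) in Hy.
  change (Rabs (f y - f t) < eps).
  apply Rle_lt_trans with ((Rabs k + 1) * Rabs (y - t)).
  - eapply Rle_trans; [apply Hf|]. apply Rmult_le_compat_r; [apply Rabs_pos|].
    pose proof (Rle_abs k); lra.
  - pose proof (Rabs_pos k).
    apply Rlt_le_trans with ((Rabs k + 1) * (eps / (Rabs k + 1))).
    + apply Rmult_lt_compat_l; lra.
    + right; field; lra.
Qed.

Lemma Rmin_0_lipschitz x y : Rabs (Rmin x 0 - Rmin y 0) <= 1 * Rabs (x - y).
Proof. unfold Rmin. repeat destruct Rle_dec; unfold Rabs; repeat destruct Rcase_abs; lra. Qed.

Lemma opp_Rmax_0_lipschitz x y : Rabs (- Rmax x 0 - - Rmax y 0) <= 1 * Rabs (x - y).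
Proof. unfold Rmax. repeat destruct Rle_dec; unfold Rabs; repeat destruct Rcase_abs; lra. Qed.

Lemma slope_bound_abs (f : R -> R) (a b m : R) :
  0 <= m -> (forall s t, a <= s -> s <= t -> t <= b -> m * (t - s) <= f t - f s) ->
  forall x y, a <= x <= b -> a <= y <= b -> m * Rabs (x - y) <= Rabs (f x - f y).
Proof.
  intros Hm Hslope x y Hx Hy. destruct (Rle_dec y x).
  - pose proof (Hslope y x ltac:(lra) r ltac:(lra)).
    assert (0 <= m * (x - y)) by (apply Rmult_le_pos; lra).
    rewrite !Rabs_right by lra. lra.
  - pose proof (Hslope x y ltac:(lra) ltac:(lra) ltac:(lra)).
    assert (0 <= m * (y - x)) by (apply Rmult_le_pos; lra).
    rewrite Rabs_left, Rabs_left1 by lra. lra.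
Qed.

Lemma is_derive_inverse (f g df : R -> R) (lb ub x : R) :
  (forall y, is_derive f y (df y)) -> continuous g x -> lb < x < ub ->
  g lb <= g x <= g ub -> (forall t, lb <= t <= ub -> f (g t) = t) -> df (g x) <> 0 ->
  is_derive g x (/ df (g x)).
Proof.
  intros Hf Hg Hx Hmono Hinv Hdf.
  assert (Prf : forall y, g lb <= y <= g ub -> derivable_pt f y)
    by (intros y _; apply ex_derive_Reals_0; eexists; apply Hf).
  assert (Hd : forall pr, derive_pt f (g x) pr = df (g x))
    by (intros pr; apply derive_pt_eq_0, is_derive_Reals, Hf).
  apply is_derive_Reals. rewrite <- (Hd (Prf (g x) Hmono)), <- Rdiv_1_l.
  apply (derivable_pt_lim_recip_interv f g lb ub x Prf); auto; [|lra|now rewrite Hd].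
  now apply continuity_pt_filterlim.
Qed.

Lemma continuous_cont_on (a b : R) (f : R -> R) :
  (forall t, continuous f t) -> cont_on a b f.
Proof. intros Hf t _. eapply filterlim_filter_le_1; [apply filter_le_within | apply Hf]. Qed.

Lemma cont_on_continuous_interior (a b t : R) (f : R -> R) :
  cont_on a b f -> a < t < b -> continuous f t.
Proof.
  intros Hf Ht. eapply filterlim_filter_le_1; [|apply Hf; lra].
  intros P HP. unfold within in HP.
  apply (filter_imp (fun s => (a <= s <= b -> P s) /\ a < s < b));
    [intros s [H1 H2]; apply H1; lra|].
  apply filter_and; [exact HP|].
  apply (locally_interval _ t a b); simpl; tauto.
Qed.

Lemma cont_on_comp (a b c d : R) (f u : R -> R) :
  cont_on a b f -> (forall t, continuous u t) -> (forall t, c <= t <= d -> a <= u t <= b) ->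
  cont_on c d (fun t => f (u t)).
Proof.
  intros Hf Hu Hmap t Ht. eapply filterlim_comp; [|apply Hf, Hmap, Ht].
  intros P HP. unfold filtermap, within in *.
  apply (filter_imp (fun s => a <= u s <= b -> P (u s))); [auto|exact (Hu t _ HP)].
Qed.

Lemma cont_on_mult (a b : R) (f g : R -> R) :
  cont_on a b f -> (forall t, continuous g t) -> cont_on a b (fun t => f t * g t).
Proof.
  intros Hf Hg t Ht. apply (filterlim_comp_2 (G := locally (f t)) (H := locally (g t)) f g Rmult).
  - apply Hf, Ht.
  - eapply filterlim_filter_le_1; [apply filter_le_within | apply Hg].
  - apply (@filterlim_mult R_AbsRing).
Qed.

Lemma cont_on_right_end_unique (a b c : R) (f g : R -> R) :
  a < b -> c < b -> cont_on a b f -> cont_on a b g ->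
  (forall t, c < t < b -> f t = g t) -> f b = g b.
Proof.
  intros Hab Hcb Hf Hg Heq.
  assert (Hleft : filter_le (at_left b) (within (fun s => a <= s <= b) (locally b))).
  { intros P HP. unfold at_left, within in *.
    apply (filter_imp (fun s => (a <= s <= b -> P s) /\ a < s));
      [intros s [H1 H2] Hs; apply H1; lra|].
    apply filter_and; [exact HP|]. apply (locally_interval _ b a p_infty); simpl; auto. }
  refine (filterlim_locally_unique (F := at_left b) f (f b) (g b) _ _).
  - eapply filterlim_filter_le_1; [exact Hleft | apply Hf; lra].
  - apply (filterlim_ext_loc g).
    + unfold at_left, within. apply (filter_imp (fun s => c < s)).
      * intros s Hs Hsb. symmetry; apply Heq; lra.
      * apply (locally_interval _ b c p_infty); simpl; auto.
    + eapply filterlim_filter_le_1; [exact Hleft | apply Hg; lra].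
Qed.

Lemma phi_id s : 0 <= s <= 1 -> phi s = s.
Proof. intros Hs. unfold phi. destruct Rlt_dec; [lra|]. destruct Rle_dec; lra. Qed.

Lemma phi_bounds s : 0 <= phi s <= 1.
Proof. unfold phi. destruct Rlt_dec; [lra|]. destruct Rle_dec; lra. Qed.

Lemma phi_nonpos s : s <= 0 -> phi s = 0.
Proof. intros Hs. unfold phi. destruct Rlt_dec; [lra|]. destruct Rle_dec; lra. Qed.

Lemma phi_ge_1 s : 1 <= s -> phi s = 1.
Proof. intros Hs. unfold phi. destruct Rlt_dec; [lra|]. destruct Rle_dec; lra. Qed.

Lemma phi_lipschitz s t : Rabs (phi s - phi t) <= Rabs (s - t).
Proof.
  unfold phi. repeat destruct Rlt_dec; repeat destruct Rle_dec;
    unfold Rabs; repeat destruct Rcase_abs; lra.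
Qed.

Lemma exists_phi_preimage (f : R -> R) (a b : R) :
  a < b -> (forall s, continuous f s) -> f a = 0 -> f b = 1 ->
  exists g : R -> R, forall t, a <= g t <= b /\ f (g t) = phi t.
Proof.
  intros Hab Hf Ha Hb.
  assert (Hivt : forall t, {x | Rmin a b <= x <= Rmax a b /\ f x = phi t}).
  { intros t. apply IVT_gen_consistent; [exact Hf|].
    rewrite Ha, Hb, Rmin_left, Rmax_right by lra. apply phi_bounds. }
  exists (fun t => proj1_sig (Hivt t)). intros t.
  destruct (Hivt t) as [y Hy]; simpl. rewrite Rmin_left, Rmax_right in Hy by lra. exact Hy.
Qed.

Lemma increasing_inverse (f : R -> R) (a b m : R) :
  a < b -> 0 < m -> (forall s, continuous f s) -> f a = 0 -> f b = 1 ->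
  (forall s t, a <= s -> s <= t -> t <= b -> m * (t - s) <= f t - f s) ->
  exists g : R -> R,
    (forall t, continuous g t) /\ (forall t, a <= g t <= b /\ f (g t) = phi t) /\
    (forall t, t <= 0 -> g t = a) /\ (forall t, 1 <= t -> g t = b).
Proof.
  intros Hab Hm Hf Ha Hb Hslope.
  destruct (exists_phi_preimage f a b Hab Hf Ha Hb) as [g Hg]. exists g.
  assert (Hfix : forall t x, a <= x <= b -> m * Rabs (g t - x) <= Rabs (phi t - f x)).
  { intros t x Hx. destruct (Hg t) as [Hgt <-]. apply (slope_bound_abs f a b); auto; lra. }
  assert (Hpin : forall t x, a <= x <= b -> phi t = f x -> g t = x).
  { intros t x Hx Hphi. specialize (Hfix t x Hx).
    rewrite Hphi, Rminus_diag, Rabs_R0 in Hfix. pose proof (Rabs_pos (g t - x)).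
    assert (Hzero : Rabs (g t - x) = 0) by nra. apply Rabs_eq_0 in Hzero. lra. }
  split; [|split; [exact Hg | split]].
  - apply (lipschitz_continuous g (/ m)). intros t s.
    destruct (Hg s) as [Hs Hfs]. specialize (Hfix t (g s) Hs). rewrite Hfs in Hfix.
    pose proof (phi_lipschitz t s).
    apply (Rmult_le_reg_l m); [exact Hm|]. rewrite <- Rmult_assoc, Rinv_r, Rmult_1_l; lra.
  - intros t Ht. apply Hpin; [lra|]. rewrite phi_nonpos, Ha; auto.
  - intros t Ht. apply Hpin; [lra|]. rewrite phi_ge_1, Hb; auto.
Qed.

(** * Uniqueness for planar ODEs *)

Definition dot (x y : R * R) : R := fst x * fst y + snd x * snd y.

Definition vdiff (x y : R * R) : R * R := (fst x - fst y, snd x - snd y).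

Lemma vnorm_sq x : vnorm x ^ 2 = dot x x.
Proof.
  unfold vnorm, dot. rewrite pow2_sqrt; [ring|].
  pose proof (pow2_ge_0 (fst x)); pose proof (pow2_ge_0 (snd x)); lra.
Qed.

Lemma dot_cauchy_schwarz x y : dot x y ^ 2 <= dot x x * dot y y.
Proof.
  unfold dot. pose proof (pow2_ge_0 (fst x * snd y - snd x * fst y)). nra.
Qed.

Definition one_sided_lipschitz_on_bounded_sets (F : R -> R * R -> R * R) : Prop :=
  forall r, exists L, forall t x y, dot x x <= r -> dot y y <= r ->
    dot (vdiff x y) (vdiff (F t x) (F t y)) <= L * dot (vdiff x y) (vdiff x y).

Lemma gronwall_zero (D dD : R -> R) (L b : R) :
  0 <= b ->
  (forall t, 0 <= t <= b -> continuity_pt D t) ->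
  (forall t, 0 < t < b -> is_derive D t (dD t)) ->
  (forall t, 0 <= t <= b -> 0 <= D t /\ dD t <= L * D t) ->
  D 0 = 0 -> D b = 0.
Proof.
  intros Hb HDc HDd Hbound HD0.
  destruct (MVT_gen (fun t => D t * exp (- (L * t))) 0 b
              (fun t => (dD t - L * D t) * exp (- (L * t)))) as [c [Hc HV]].
  - rewrite Rmin_left, Rmax_right by lra. intros t Ht.
    auto_derive; [eexists; apply HDd, Ht|].
    replace (Derive (fun x : R => D x) t) with (dD t)
      by (symmetry; apply is_derive_unique, HDd, Ht).
    ring.
  - rewrite Rmin_left, Rmax_right by lra. intros t Ht.
    specialize (HDc t Ht). reg.
  - rewrite Rmin_left, Rmax_right in Hc by lra.
    destruct (Hbound c Hc) as [_ Hdc]. destruct (Hbound b ltac:(lra)) as [HDb _].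
    pose proof (exp_pos (- (L * c))). pose proof (exp_pos (- (L * b))).
    rewrite HD0, Rmult_0_l in HV.
    assert (0 <= (L * D c - dD c) * exp (- (L * c))) by (apply Rmult_le_pos; lra).
    assert (D b * exp (- (L * b)) <= 0) by nra.
    nra.
Qed.

Lemma ode_uniqueness (F : R -> R * R -> R * R) (b : R) (y1 y2 w1 w2 : R -> R) :
  one_sided_lipschitz_on_bounded_sets F -> 0 <= b ->
  (forall t, 0 <= t <= b ->
     continuity_pt y1 t /\ continuity_pt y2 t /\ continuity_pt w1 t /\ continuity_pt w2 t) ->
  (forall t, 0 < t < b ->
     is_derive y1 t (fst (F t (y1 t, y2 t))) /\ is_derive y2 t (snd (F t (y1 t, y2 t))) /\
     is_derive w1 t (fst (F t (w1 t, w2 t))) /\ is_derive w2 t (snd (F t (w1 t, w2 t)))) ->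
  y1 0 = w1 0 -> y2 0 = w2 0 -> y1 b = w1 b /\ y2 b = w2 b.
Proof.
  intros HF Hb Hc Hd H1 H2.
  destruct (continuity_ab_maj (fun s => y1 s ^ 2 + y2 s ^ 2 + (w1 s ^ 2 + w2 s ^ 2)) 0 b Hb)
    as [smax [Hmax _]].
  { intros s Hs. destruct (Hc s Hs) as (? & ? & ? & ?). reg. }
  set (r := y1 smax ^ 2 + y2 smax ^ 2 + (w1 smax ^ 2 + w2 smax ^ 2)) in Hmax.
  destruct (HF r) as [L HL].
  assert (HD : (y1 b - w1 b) ^ 2 + (y2 b - w2 b) ^ 2 = 0).
  { apply (gronwall_zero (fun s => (y1 s - w1 s) ^ 2 + (y2 s - w2 s) ^ 2)
      (fun s => 2 * dot (vdiff (y1 s, y2 s) (w1 s, w2 s))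
                       (vdiff (F s (y1 s, y2 s)) (F s (w1 s, w2 s)))) (2 * L) b Hb).
    - intros s Hs. destruct (Hc s Hs) as (? & ? & ? & ?). reg.
    - intros s Hs. destruct (Hd s Hs) as (? & ? & ? & ?).
      unfold dot, vdiff; cbn [fst snd]. auto_derive.
      + repeat split; eexists; eassumption.
      + repeat match goal with H : is_derive ?f s ?l |- _ =>
          replace (Derive (fun x : R => f x) s) with l
            by (symmetry; apply is_derive_unique, H); clear H end.
        ring.
    - intros s Hs. specialize (Hmax s Hs). cbv beta in *.
      split; [apply Rplus_le_le_0_compat; apply pow2_ge_0|].
      specialize (HL s (y1 s, y2 s) (w1 s, w2 s)). unfold dot, vdiff in *; cbn [fst snd] in *.
      pose proof (pow2_ge_0 (y1 s)). pose proof (pow2_ge_0 (y2 s)).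
      pose proof (pow2_ge_0 (w1 s)). pose proof (pow2_ge_0 (w2 s)).
      assert (Hy : y1 s * y1 s + y2 s * y2 s <= r) by lra.
      assert (Hw : w1 s * w1 s + w2 s * w2 s <= r) by lra.
      specialize (HL Hy Hw). lra.
    - rewrite H1, H2. ring. }
  rewrite <- !Rsqr_pow2 in HD. apply Rplus_sqr_eq_0 in HD. lra.
Qed.

Definition mix (p : R) (x : R * R) : R * R :=
  (p * fst (A1 x) + (1 - p) * fst (A0 x), p * snd (A1 x) + (1 - p) * snd (A0 x)).

Definition field (c p : R) (x : R * R) : R * R :=
  (c * (1 + vnorm x ^ 2) * fst (mix p x), c * (1 + vnorm x ^ 2) * snd (mix p x)).

Lemma rhs_saturated c x w : rhs c x w 1 = field c (phi w) x.
Proof.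
  unfold rhs, g, field, mix; cbv zeta; cbn [fst snd].
  rewrite (phi_id 1) by lra. f_equal; ring.
Qed.

Lemma mix_dissipative p e : 0 <= p <= 1 -> dot e (mix p e) <= 3 / 4 * dot e e.
Proof.
  intros Hp. unfold dot, mix, A0, A1; cbn [fst snd].
  pose proof (pow2_ge_0 (fst e - snd e)). pose proof (pow2_ge_0 (fst e + snd e)). nra.
Qed.

Lemma mix_bounded p y : 0 <= p <= 1 -> dot (mix p y) (mix p y) <= 9 * dot y y.
Proof.
  intros Hp.
  pose proof (dot_cauchy_schwarz (- (1 - p) / 10, 2 * p + (1 - p) / 2) y) as H1.
  pose proof (dot_cauchy_schwarz (- 2 * (1 - p) - p / 2, - p / 10) y) as H2.
  assert (Hy : 0 <= dot y y) by (unfold dot; nra).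
  unfold dot, mix, A0, A1 in *; cbn [fst snd] in *.
  assert (Hrows : (- (1 - p) / 10) ^ 2 + (2 * p + (1 - p) / 2) ^ 2
                  + ((- 2 * (1 - p) - p / 2) ^ 2 + (- p / 10) ^ 2) <= 9) by nra.
  nra.
Qed.

Lemma field_one_sided_lipschitz c p r x y :
  0 <= c -> 0 <= p <= 1 -> dot x x <= r -> dot y y <= r ->
  dot (vdiff x y) (vdiff (field c p x) (field c p y))
    <= c * (1 + 8 * r) * dot (vdiff x y) (vdiff x y).
Proof.
  intros Hc Hp Hx Hy.
  set (e := vdiff x y). set (s := (fst x + fst y, snd x + snd y)).
  assert (Hsplit : dot e (vdiff (field c p x) (field c p y))
                   = c * ((1 + dot x x) * dot e (mix p e) + dot s e * dot e (mix p y))).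
  { unfold field. rewrite !vnorm_sq. unfold e, s, dot, vdiff, mix, A0, A1; cbn [fst snd]. ring. }
  rewrite Hsplit, Rmult_assoc. apply Rmult_le_compat_l; [exact Hc|].
  assert (HE : 0 <= dot e e) by (unfold dot; nra).
  assert (Hr : 0 <= r) by (unfold dot in Hx; nra).
  assert (Hs : dot s s <= 4 * r).
  { unfold s, dot in *; cbn [fst snd].
    pose proof (pow2_ge_0 (fst x - fst y)). pose proof (pow2_ge_0 (snd x - snd y)). nra. }
  assert (Hu : dot s e ^ 2 <= 4 * r * dot e e).
  { eapply Rle_trans; [apply dot_cauchy_schwarz|]. apply Rmult_le_compat_r; lra. }
  assert (Hv : dot e (mix p y) ^ 2 <= 9 * r * dot e e).
  { eapply Rle_trans; [apply dot_cauchy_schwarz|].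
    pose proof (mix_bounded p y Hp). rewrite Rmult_comm. apply Rmult_le_compat_r; lra. }
  assert (Huv : dot s e * dot e (mix p y) <= 13 / 2 * r * dot e e)
    by (pose proof (pow2_ge_0 (dot s e - dot e (mix p y))); lra).
  assert (Hk : (1 + dot x x) * dot e (mix p e) <= (1 + r) * (3 / 4 * dot e e)).
  { pose proof (mix_dissipative p e Hp). assert (0 <= dot x x) by (unfold dot; nra).
    apply Rle_trans with ((1 + dot x x) * (3 / 4 * dot e e)); [apply Rmult_le_compat_l|]; nra. }
  nra.
Qed.

(** * A spiral orbit *)

Definition q (s : R) : R := (1 - sin (2 * s)) / 2.

Lemma q_bounds s : 0 <= q s <= 1.
Proof. unfold q. pose proof (SIN_bound (2 * s)). lra. Qed.

Definition radial_rate (s : R) : R := dot (cos s, - sin s) (mix (q s) (cos s, - sin s)).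

Definition angular_rate (s : R) : R := dot (- sin s, - cos s) (mix (q s) (cos s, - sin s)).

Definition den (s : R) : R := 51 - cos (4 * s) + 15 * sin (4 * s).

Lemma cos_4 s : cos (4 * s) = (cos s ^ 2 - sin s ^ 2) ^ 2 - (2 * sin s * cos s) ^ 2.
Proof. replace (4 * s) with (2 * (2 * s)) by ring. rewrite cos_2a, sin_2a, cos_2a. ring. Qed.

Lemma sin_4 s : sin (4 * s) = 2 * (2 * sin s * cos s) * (cos s ^ 2 - sin s ^ 2).
Proof. replace (4 * s) with (2 * (2 * s)) by ring. rewrite sin_2a, sin_2a, cos_2a. ring. Qed.

Lemma radial_rate_eq s : radial_rate s = (13 - 15 * cos (4 * s) - sin (4 * s)) / 40.
Proof.
  rewrite cos_4, sin_4. unfold radial_rate, dot, mix, q, A0, A1; cbn [fst snd].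
  rewrite sin_2a. pose proof (sin2_cos2 s) as H. unfold Rsqr in H.
  field_simplify_eq. cbn [pow]. nsatz.
Qed.

Lemma angular_rate_eq s : angular_rate s = den s / 40.
Proof.
  unfold den. rewrite cos_4, sin_4. unfold angular_rate, dot, mix, q, A0, A1; cbn [fst snd].
  rewrite sin_2a. pose proof (sin2_cos2 s) as H. unfold Rsqr in H.
  field_simplify_eq. cbn [pow]. nsatz.
Qed.

Lemma mix_q_frame s :
  fst (mix (q s) (cos s, - sin s)) = radial_rate s * cos s - angular_rate s * sin s /\
  snd (mix (q s) (cos s, - sin s)) = - radial_rate s * sin s - angular_rate s * cos s.
Proof.
  unfold radial_rate, angular_rate, dot; cbn [fst snd].
  pose proof (sin2_cos2 s) as H. unfold Rsqr in H.
  destruct (mix (q s) (cos s, - sin s)) as [m1 m2]; cbn [fst snd]. split; nsatz.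
Qed.

Lemma den_bounds s : 35 <= den s <= 67.
Proof.
  unfold den. pose proof (sin2_cos2 (4 * s)) as H. unfold Rsqr in H.
  assert ((- cos (4 * s) + 15 * sin (4 * s)) ^ 2 <= 226)
    by (pose proof (pow2_ge_0 (15 * cos (4 * s) + sin (4 * s))); nra).
  nra.
Qed.

Lemma den_derive s : is_derive den s (4 * sin (4 * s) + 60 * cos (4 * s)).
Proof. unfold den. auto_derive; [auto | ring]. Qed.

Lemma continuous_inv_den x : continuous (fun r => / den r) x.
Proof.
  apply (@ex_derive_continuous R_AbsRing R_NormedModule).
  pose proof (den_bounds x). unfold den in *. auto_derive. lra.
Qed.

(* An explicit antiderivative of [radial_rate / angular_rate]: the logarithm absorbs the
   oscillating part of the numerator, leaving [13 / den]. *)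
Definition K (s : R) : R := (ln 50 - ln (den s)) / 4 + 13 * RInt (fun r => / den r) 0 s.

Lemma K_derive s : is_derive K s (radial_rate s / angular_rate s).
Proof.
  pose proof (den_bounds s).
  rewrite radial_rate_eq, angular_rate_eq. unfold K. auto_derive.
  - repeat split; [eexists; apply den_derive | lra | |].
    + apply ex_RInt_continuous_R, continuous_inv_den.
    + apply filter_forall; intros x. apply continuity_pt_filterlim, continuous_inv_den.
  - replace (Derive (fun x : R => den x) s) with (4 * sin (4 * s) + 60 * cos (4 * s))
      by (symmetry; apply is_derive_unique, den_derive).
    unfold den in *. field. lra.
Qed.

Lemma RInt_inv_den_nonneg s : 0 <= s -> s / 67 <= RInt (fun r => / den r) 0 s <= s / 35.
Proof.
  intros Hs. pose proof (ex_RInt_continuous_R (fun r => / den r) 0 s continuous_inv_den) as Hex.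
  assert (Hb : forall r, / 67 <= / den r <= / 35)
    by (intros r; pose proof (den_bounds r); split; apply Rinv_le_contravar; lra).
  pose proof (RInt_ge_const _ 0 s (/ 67) Hs Hex (fun r _ => proj1 (Hb r))).
  pose proof (RInt_le_const _ 0 s (/ 35) Hs Hex (fun r _ => proj2 (Hb r))).
  lra.
Qed.

Lemma RInt_inv_den_nonpos s : s <= 0 -> s / 35 <= RInt (fun r => / den r) 0 s <= s / 67.
Proof.
  intros Hs. pose proof (ex_RInt_continuous_R (fun r => / den r) s 0 continuous_inv_den) as Hex.
  rewrite <- (@opp_RInt_swap R_CompleteNormedModule) by exact Hex. unfold opp; simpl.
  assert (Hb : forall r, / 67 <= / den r <= / 35)
    by (intros r; pose proof (den_bounds r); split; apply Rinv_le_contravar; lra).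
  pose proof (RInt_ge_const _ s 0 (/ 67) Hs Hex (fun r _ => proj1 (Hb r))).
  pose proof (RInt_le_const _ s 0 (/ 35) Hs Hex (fun r _ => proj2 (Hb r))).
  lra.
Qed.

Lemma ln_den_bounds s : - 1 / 10 <= (ln 50 - ln (den s)) / 4 <= 1 / 8.
Proof.
  pose proof (den_bounds s).
  pose proof (ln_le_sub_one (den s / 50) ltac:(lra)) as Hup.
  pose proof (ln_le_sub_one (50 / den s) ltac:(apply Rdiv_lt_0_compat; lra)) as Hlow.
  rewrite ln_div in Hup, Hlow by lra.
  assert (50 / den s <= 50 / 35) by (apply Rmult_le_compat_l; [lra | apply Rinv_le_contravar; lra]).
  lra.
Qed.

Lemma K_nonpos s : s <= -1 -> K s <= 0.
Proof.
  intros Hs. unfold K. pose proof (ln_den_bounds s). pose proof (RInt_inv_den_nonpos s). lra.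
Qed.

Lemma K_lower s : -1 <= s -> -2 / 3 + s / 6 <= K s.
Proof.
  intros Hs. unfold K. pose proof (ln_den_bounds s).
  destruct (Rle_dec 0 s).
  - pose proof (RInt_inv_den_nonneg s r). lra.
  - pose proof (RInt_inv_den_nonpos s ltac:(lra)). lra.
Qed.

Lemma K_upper s X : 0 <= X -> s <= X -> K s <= 1 / 8 + 13 * X / 35.
Proof.
  intros HX Hs. unfold K. pose proof (ln_den_bounds s).
  destruct (Rle_dec 0 s).
  - pose proof (RInt_inv_den_nonneg s r). lra.
  - pose proof (RInt_inv_den_nonpos s ltac:(lra)). lra.
Qed.

Definition spiral (s : R) : R * R := (exp (K s) * cos s, exp (K s) * - sin s).

Lemma vnorm_spiral s : vnorm (spiral s) = exp (K s).
Proof.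
  unfold vnorm, spiral; cbn [fst snd].
  replace ((exp (K s) * cos s) ^ 2 + (exp (K s) * - sin s) ^ 2)
    with (exp (K s) ^ 2 * (sin s ^ 2 + cos s ^ 2)) by ring.
  rewrite <- !Rsqr_pow2, sin2_cos2, Rmult_1_r, Rsqr_pow2.
  apply sqrt_pow2, Rlt_le, exp_pos.
Qed.

(* [/ h s] is the angular speed [40 (1 + |spiral s|^2) angular_rate s]. *)
Definition h (s : R) : R := / ((1 + exp (2 * K s)) * den s).

Lemma spiral_orbit s :
  is_derive (fun r => fst (spiral r)) s (h s * fst (field 40 (q s) (spiral s))) /\
  is_derive (fun r => snd (spiral r)) s (h s * snd (field 40 (q s) (spiral s))).
Proof.
  assert (Hmix : mix (q s) (spiral s) = (exp (K s) * fst (mix (q s) (cos s, - sin s)),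
                                         exp (K s) * snd (mix (q s) (cos s, - sin s))))
    by (unfold mix, spiral, A0, A1; cbn [fst snd]; f_equal; ring).
  unfold field, h. rewrite vnorm_spiral, Hmix. cbn [fst snd].
  destruct (mix_q_frame s) as [-> ->].
  pose proof (angular_rate_eq s) as Hang. pose proof (den_bounds s).
  replace (exp (2 * K s)) with (exp (K s) ^ 2)
    by (simpl; rewrite Rmult_1_r, <- exp_plus; f_equal; ring).
  split; unfold spiral; cbn [fst snd]; auto_derive; try (eexists; apply K_derive);
    replace (Derive (fun x : R => K x) s) with (radial_rate s / angular_rate s)
      by (symmetry; apply is_derive_unique, K_derive);
    rewrite Hang; field; pose proof (pow2_ge_0 (exp (K s))); split; lra.
Qed.

(** * Traversing the spiral in unit time *)

Lemma h_pos s : 0 < h s.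
Proof.
  unfold h. pose proof (den_bounds s). pose proof (exp_pos (2 * K s)).
  apply Rinv_0_lt_compat, Rmult_lt_0_compat; lra.
Qed.

Lemma continuous_h s : continuous h s.
Proof.
  apply (@ex_derive_continuous R_AbsRing R_NormedModule).
  pose proof (h_pos s). unfold h in *. auto_derive.
  repeat split; [eexists; apply K_derive | eexists; apply den_derive |].
  intros E; rewrite E, Rinv_0 in *; lra.
Qed.

Lemma h_lower s k : K s <= k -> / (67 * (1 + exp (2 * k))) <= h s.
Proof.
  intros Hs. unfold h. pose proof (den_bounds s). pose proof (exp_pos (2 * K s)).
  assert (exp (2 * K s) <= exp (2 * k)) by (apply exp_le_compat; lra).
  apply Rinv_le_contravar; [apply Rmult_lt_0_compat; lra|].
  rewrite Rmult_comm. apply Rmult_le_compat; lra.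
Qed.

Lemma h_upper s : -1 <= s -> h s <= exp (4 / 3 - s / 3) / 35.
Proof.
  intros Hs. pose proof (K_lower s Hs). pose proof (den_bounds s).
  pose proof (exp_pos (2 * K s)).
  apply Rle_trans with (/ (exp (2 * K s) * 35)).
  - unfold h. apply Rinv_le_contravar; [apply Rmult_lt_0_compat; lra|].
    apply Rmult_le_compat; lra.
  - rewrite Rinv_mult, <- exp_Ropp. unfold Rdiv.
    apply Rmult_le_compat_r; [lra|]. apply exp_le_compat. lra.
Qed.

Lemma RInt_h_tail_le X : -1 <= X -> RInt h (-1) X <= 27 / 35.
Proof.
  intros HX.
  set (E := fun s => exp (4 / 3 - s / 3) / 35).
  assert (HE : is_RInt E (-1) X
                 (- (3 / 35) * exp (4 / 3 - X / 3) - - (3 / 35) * exp (4 / 3 - (-1) / 3))).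
  { apply (@is_RInt_derive R_CompleteNormedModule
             (fun s => - (3 / 35) * exp (4 / 3 - s / 3)) E).
    - intros x _. unfold E. auto_derive; [auto|].
      replace (4 / 3 + - (x * / 3)) with (4 / 3 - x / 3) by field. field.
    - intros x _. apply (@ex_derive_continuous R_AbsRing R_NormedModule).
      unfold E. auto_derive. auto. }
  assert (Hle : RInt h (-1) X <= RInt E (-1) X).
  { apply RInt_le; [exact HX | apply ex_RInt_continuous_R, continuous_h | eexists; exact HE |].
    intros x Hx. apply h_upper. lra. }
  rewrite (@is_RInt_unique R_CompleteNormedModule _ _ _ _ HE) in Hle.
  assert (exp (4 / 3 - (-1) / 3) <= 9).
  { apply Rle_trans with (exp 1 * exp 1).
    - rewrite <- exp_plus. apply exp_le_compat. lra.
    - pose proof exp_le_3. pose proof (exp_pos 1). nra. }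
  pose proof (exp_pos (4 / 3 - X / 3)). lra.
Qed.

Lemma exists_start_angle X : 0 <= X -> exists p0, p0 <= -1 /\ RInt h p0 X = 1.
Proof.
  intros HX.
  set (tau := fun s => RInt h (-1) s).
  assert (Htau : forall s, continuous tau s).
  { intros s. apply (@ex_derive_continuous R_AbsRing R_NormedModule).
    eexists. apply is_derive_RInt_continuous, continuous_h. }
  assert (Hnear : tau (-1) = 0) by apply (RInt_point (-1) h).
  assert (Hfar : tau (-135) <= -1).
  { assert (Hlow : forall s, -135 <= s <= -1 -> / 134 <= h s).
    { intros s Hs. pose proof (h_lower s 0 (K_nonpos s ltac:(lra))) as H.
      rewrite Rmult_0_r, exp_0 in H. replace (67 * (1 + 1)) with 134 in H by ring. exact H. }
    pose proof (RInt_ge_const h (-135) (-1) (/ 134) ltac:(lra)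
                  (ex_RInt_continuous_R h _ _ continuous_h) Hlow).
    pose proof (RInt_Chasles_continuous h (-1) (-135) (-1) continuous_h).
    unfold tau in *. rewrite <- Hnear in *. lra. }
  assert (HtauX : 0 <= tau X <= 27 / 35).
  { split; [|apply RInt_h_tail_le; lra].
    pose proof (RInt_ge_const h (-1) X 0 ltac:(lra) (ex_RInt_continuous_R h _ _ continuous_h)
                  (fun s _ => Rlt_le _ _ (h_pos s))).
    unfold tau. lra. }
  destruct (IVT_gen_consistent tau (-135) (-1) (tau X - 1) Htau) as [p0 [Hp0 Hval]].
  { rewrite Hnear, Rmin_left, Rmax_right by lra. lra. }
  rewrite Rmin_left, Rmax_right in Hp0 by lra.
  exists p0. split; [lra|].
  pose proof (RInt_Chasles_continuous h (-1) p0 X continuous_h). unfold tau in *. lra.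
Qed.

Lemma time_change X : 0 <= X ->
  exists theta : R -> R,
    (forall t, continuous theta t) /\
    (forall t, t <= 0 -> theta t <= -1) /\
    (forall t, 1 <= t -> theta t = X) /\
    (forall t, 0 < t < 1 -> is_derive theta t (/ h (theta t))).
Proof.
  intros HX. destruct (exists_start_angle X HX) as [p0 [Hp0 Hint]].
  set (sigma := fun s => RInt h p0 s).
  assert (Hsigma : forall s, is_derive sigma s (h s))
    by (intros s; apply is_derive_RInt_continuous, continuous_h).
  set (m := / (67 * (1 + exp (2 * (1 / 8 + 13 * X / 35))))).
  assert (Hm : 0 < m)
    by (apply Rinv_0_lt_compat; pose proof (exp_pos (2 * (1 / 8 + 13 * X / 35))); lra).
  destruct (increasing_inverse sigma p0 X m) as (theta & Hcont & Htheta & Hstart & Hend).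
  - lra.
  - exact Hm.
  - intros s. apply (@ex_derive_continuous R_AbsRing R_NormedModule). eexists. apply Hsigma.
  - apply (RInt_point p0 h).
  - exact Hint.
  - intros s t Hs Hst Ht. unfold sigma.
    rewrite <- (RInt_Chasles_continuous h p0 s t continuous_h).
    enough (m * (t - s) <= RInt h s t) by lra.
    apply RInt_ge_const; [exact Hst | apply ex_RInt_continuous_R, continuous_h |].
    intros r Hr. apply h_lower, K_upper; lra.
  - exists theta. split; [exact Hcont|]. split; [|split; [exact Hend|]].
    + intros t Ht. rewrite Hstart by exact Ht. exact Hp0.
    + intros t Ht. apply (is_derive_inverse sigma theta h 0 1 t Hsigma (Hcont t) Ht).
      * rewrite (Hstart 0), (Hend 1) by lra. apply Htheta.
      * intros u Hu. rewrite (proj2 (Htheta u)). apply phi_id. exact Hu.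
      * apply Rgt_not_eq, h_pos.
Qed.

Lemma exists_target_angle M : 0 < M -> exists X, 0 <= X /\ q X = 0 /\ 2 * M <= exp (K X).
Proof.
  intros HM. pose proof PI_RGT_0.
  destruct (INR_archimed PI (6 * Rabs (ln (2 * M)) + 4)) as [n Hn]; [lra|].
  pose proof (Rle_abs (ln (2 * M))). pose proof (Rabs_pos (ln (2 * M))).
  exists (PI / 4 + INR n * PI). split; [|split].
  - lra.
  - unfold q. replace (2 * (PI / 4 + INR n * PI)) with (PI / 2 + 2 * INR n * PI) by field.
    rewrite sin_period, sin_PI2. lra.
  - rewrite <- (exp_ln (2 * M)) by lra. apply exp_le_compat.
    pose proof (K_lower (PI / 4 + INR n * PI) ltac:(lra)). lra.
Qed.

(** * The escaping solution *)

Section Trajectory.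

Variable theta : R -> R.
Hypothesis theta_continuous : forall t, continuous theta t.
Hypothesis theta_start : forall t, t <= 0 -> theta t <= -1.
Hypothesis theta_switch_off : forall t, 1 <= t -> q (theta t) = 0.
Hypothesis theta_derive : forall t, 0 < t < 1 -> is_derive theta t (/ h (theta t)).

Definition switching (s : R) : R := q (theta (s + 1)).

Definition traj1 (t : R) : R := fst (spiral (theta t)).

Definition traj2 (t : R) : R := snd (spiral (theta t)).

Lemma continuous_switching s : continuous switching s.
Proof.
  unfold switching. apply (continuous_comp (fun s => theta (s + 1)) q).
  - apply (continuous_comp (fun s => s + 1) theta); [|apply theta_continuous].
    apply (@ex_derive_continuous R_AbsRing R_NormedModule). auto_derive. auto.
  - apply (@ex_derive_continuous R_AbsRing R_NormedModule). unfold q. auto_derive. auto.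
Qed.

Lemma continuous_traj1 t : continuous traj1 t.
Proof.
  apply (continuous_comp theta (fun s => fst (spiral s))); [apply theta_continuous|].
  apply (@ex_derive_continuous R_AbsRing R_NormedModule). eexists. apply spiral_orbit.
Qed.

Lemma continuous_traj2 t : continuous traj2 t.
Proof.
  apply (continuous_comp theta (fun s => snd (spiral s))); [apply theta_continuous|].
  apply (@ex_derive_continuous R_AbsRing R_NormedModule). eexists. apply spiral_orbit.
Qed.

Lemma switching_bounded s : Rabs (switching s) <= 1.
Proof. unfold switching. pose proof (q_bounds (theta (s + 1))). rewrite Rabs_pos_eq; lra. Qed.

Lemma switching_nonneg_zero s : 0 <= s -> switching s = 0.
Proof. intros Hs. apply theta_switch_off. lra. Qed.

Lemma traj_initial_norm t : t <= 0 -> vnorm (traj1 t, traj2 t) <= 1.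
Proof.
  intros Ht. unfold traj1, traj2. rewrite <- surjective_pairing, vnorm_spiral, <- exp_0.
  apply exp_le_compat, K_nonpos, theta_start, Ht.
Qed.

Lemma traj_derive t : 0 < t < 1 ->
  is_derive traj1 t (fst (field 40 (q (theta t)) (traj1 t, traj2 t))) /\
  is_derive traj2 t (snd (field 40 (q (theta t)) (traj1 t, traj2 t))).
Proof.
  intros Ht. unfold traj1, traj2. rewrite <- surjective_pairing.
  pose proof (h_pos (theta t)). destruct (spiral_orbit (theta t)) as [H1 H2].
  assert (Hval : forall v : R, scal (/ h (theta t)) (h (theta t) * v) = v)
    by (intros v; unfold scal; simpl; unfold mult; simpl; field; lra).
  split.
  - set (v := fst (field 40 (q (theta t)) (spiral (theta t)))).
    rewrite <- (Hval v).
    exact (is_derive_comp (fun r => fst (spiral r)) theta t _ _ H1 (theta_derive t Ht)).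
  - set (v := snd (field 40 (q (theta t)) (spiral (theta t)))).
    rewrite <- (Hval v).
    exact (is_derive_comp (fun r => snd (spiral r)) theta t _ _ H2 (theta_derive t Ht)).
Qed.

Lemma delayed_rhs (z20 z1 z2 : R -> R) (x : R * R) (t : R) :
  (forall s, -2 <= s <= -1 -> z20 s = 1) ->
  (forall s, -2 <= s <= 0 -> z1 s = switching s /\ z2 s = z20 s) -> 0 < t < 1 ->
  rhs 40 x (z1 (t - 1)) (z2 (t - 2)) = field 40 (q (theta t)) x.
Proof.
  intros Hone Hz Ht.
  rewrite (proj1 (Hz (t - 1) ltac:(lra))), (proj2 (Hz (t - 2) ltac:(lra))), Hone by lra.
  rewrite rhs_saturated, phi_id by apply q_bounds.
  unfold switching. do 3 f_equal. ring.
Qed.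

Lemma solution_exists (z20 : R -> R) :
  cont_on (-2) 0 z20 -> (forall s, -2 <= s <= -1 -> z20 s = 1) ->
  exists x1 x2 z1 z2, is_solution 40 traj1 traj2 switching z20 x1 x2 z1 z2.
Proof.
  intros Hz20 Hone.
  set (z2 := fun t => z20 (Rmin t 0) * exp (- Rmax t 0)).
  assert (Hz2 : forall t, -2 <= t <= 0 -> z2 t = z20 t).
  { intros t Ht. unfold z2. rewrite Rmin_left, Rmax_right, Ropp_0, exp_0 by lra. ring. }
  assert (Hz2' : forall t, 0 < t -> locally t (fun s => z2 s = z20 0 * exp (- s))).
  { intros t Ht. apply (locally_interval _ t 0 p_infty); simpl; auto.
    intros s Hs _. unfold z2. rewrite Rmin_right, Rmax_left by lra. reflexivity. }
  exists traj1, traj2, switching, z2.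
  split; [|split; [|split; [|split; [|split]]]].
  - intros t Ht. auto.
  - apply continuous_cont_on, continuous_traj1.
  - apply continuous_cont_on, continuous_traj2.
  - apply continuous_cont_on, continuous_switching.
  - apply cont_on_mult.
    + apply (cont_on_comp (-2) 0);
        [exact Hz20 | apply (lipschitz_continuous _ 1), Rmin_0_lipschitz |].
      intros s Hs. unfold Rmin. destruct Rle_dec; lra.
    + intros s. apply (continuous_comp (fun s => - Rmax s 0) exp);
        [apply (lipschitz_continuous _ 1), opp_Rmax_0_lipschitz | apply continuous_exp].
  - intros t Ht. rewrite (delayed_rhs z20 switching z2) by auto.
    destruct (traj_derive t Ht) as [Hd1 Hd2]. split; [exact Hd1|]. split; [exact Hd2|]. split.
    + rewrite switching_nonneg_zero, Ropp_0 by lra.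
      apply (is_derive_ext_loc (fun _ => 0)); [|apply (@is_derive_const R_AbsRing)].
      apply (locally_interval _ t 0 p_infty); simpl; try lra.
      intros s Hs _. symmetry. apply switching_nonneg_zero. lra.
    + apply (is_derive_ext_loc (fun s => z20 0 * exp (- s))).
      * apply (filter_imp _ _ (fun s E => eq_sym E)), Hz2'. lra.
      * rewrite (locally_singleton _ _ (Hz2' t ltac:(lra))). auto_derive; [auto | ring].
Qed.

Lemma solution_endpoint (z20 x1 x2 z1 z2 : R -> R) :
  (forall s, -2 <= s <= -1 -> z20 s = 1) ->
  is_solution 40 traj1 traj2 switching z20 x1 x2 z1 z2 -> x1 1 = traj1 1 /\ x2 1 = traj2 1.
Proof.
  intros Hone (Hinit & Hx1 & Hx2 & _ & _ & Hder).
  assert (Hz : forall u, -2 <= u <= 0 -> z1 u = switching u /\ z2 u = z20 u)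
    by (intros u Hu; destruct (Hinit u Hu) as (_ & _ & ? & ?); auto).
  assert (Hagree : forall t, 0 < t < 1 -> x1 t = traj1 t /\ x2 t = traj2 t).
  { intros t Ht.
    apply (ode_uniqueness (fun s x => field 40 (q (theta s)) x)); [| lra | | | |].
    - intros r. exists (40 * (1 + 8 * r)). intros s x y Hx Hy.
      apply field_one_sided_lipschitz; auto using q_bounds; lra.
    - intros s Hs. rewrite !continuity_pt_filterlim. repeat split.
      + apply (cont_on_continuous_interior (-2) 1); [exact Hx1 | lra].
      + apply (cont_on_continuous_interior (-2) 1); [exact Hx2 | lra].
      + apply continuous_traj1.
      + apply continuous_traj2.
    - intros s Hs. destruct (Hder s ltac:(lra)) as (Hd1 & Hd2 & _).
      rewrite (delayed_rhs z20 z1 z2) in Hd1, Hd2 by (auto; lra).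
      destruct (traj_derive s ltac:(lra)). auto.
    - apply Hinit. lra.
    - apply Hinit. lra. }
  split; apply (cont_on_right_end_unique (-2) 1 0); try lra; auto.
  - apply continuous_cont_on, continuous_traj1.
  - intros t Ht. apply Hagree, Ht.
  - apply continuous_cont_on, continuous_traj2.
  - intros t Ht. apply Hagree, Ht.
Qed.

End Trajectory.

Theorem lemma1 :
  exists c : R, 0 < c /\
  forall M : R, 0 < M ->
  exists (z10 x01 x02 : R -> R),
    cont_on (-2) 0 z10 /\
    (forall t, -2 <= t <= 0 -> Rabs (z10 t) <= 1) /\
    z10 0 = 0 /\
    cont_on (-2) 0 x01 /\ cont_on (-2) 0 x02 /\
    (forall t, -2 <= t <= 0 -> vnorm (x01 t, x02 t) <= 1) /\
    forall z20 : R -> R,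
      cont_on (-2) 0 z20 ->
      (forall t, -2 <= t <= -1 -> z20 t = 1) ->
      (exists x1 x2 z1 z2 : R -> R, is_solution c x01 x02 z10 z20 x1 x2 z1 z2) /\
      (forall x1 x2 z1 z2 : R -> R,
         is_solution c x01 x02 z10 z20 x1 x2 z1 z2 ->
         2 * M <= vnorm (x1 1, x2 1)).
Proof.
  exists 40. split; [lra|]. intros M HM.
  destruct (exists_target_angle M HM) as (X & HX & HqX & HKX).
  destruct (time_change X HX) as (theta & Hcont & Hstart & Htarget & Hder).
  assert (Hq : forall t, 1 <= t -> q (theta t) = 0) by (intros t Ht; rewrite Htarget; auto).
  exists (switching theta), (traj1 theta), (traj2 theta).
  split; [apply continuous_cont_on, continuous_switching; auto|].
  split; [intros t _; apply switching_bounded|].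
  split; [apply switching_nonneg_zero; auto; lra|].
  split; [apply continuous_cont_on, continuous_traj1; auto|].
  split; [apply continuous_cont_on, continuous_traj2; auto|].
  split; [intros t Ht; apply traj_initial_norm; auto; lra|].
  intros z20 Hz20 Hone. split; [apply solution_exists; auto|].
  intros x1 x2 z1 z2 Hsol.
  destruct (solution_endpoint theta Hcont Hder z20 x1 x2 z1 z2 Hone Hsol) as [-> ->].
  unfold traj1, traj2. rewrite <- surjective_pairing, vnorm_spiral, Htarget by lra. exact HKX.
Qed.
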